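(* Consider the following four conditions, each required for all $0\le i,j\le d$: (C1) $E^*_iAE^*_j=0$ if $i-j>1$, and $E^*_iAE^*_j\ne0$ if $i-j=1$; (C2) $E^*_iAE^*_j=0$ if $j-i>1$, and $E^*_iAE^*_j\ne0$ if $j-i=1$; (C3) $E_iA^*E_j=0$ if $i-j>1$, and $E_iA^*E_j\ne0$ if $i-j=1$; (C4) $E_iA^*E_j=0$ if $j-i>1$, and $E_iA^*E_j\ne0$ if $j-i=1$. If at least three of (C1)–(C4) hold, then all four hold; that is, $(A;A^*;\{E_i\}_{i=0}^d;\{E^*_i\}_{i=0}^d)$ is a Leonard system.
   Context: Let $\mathbb K$ be a field, $d\ge 0$ an integer, and $\mathcal A$ a $\mathbb K$-algebra isomorphic to $\mathrm{Mat}_{d+1}(\mathbb K)$, with identity $I$. An element of $\mathcal A$ is multiplicity-free if it has $d+1$ mutually distinct eigenvalues, all in $\mathbb K$; for such $A$ with eigenvalues $\theta_0,\ldots,\theta_d$, the primitive idempotent associated with $\theta_i$ is $E_i=\prod_{j\ne i}(A-\theta_jI)/(\theta_i-\theta_j)$. Standing setup: $A,A^*$ are multiplicity-free elements of $\mathcal A$ ($A^*$ is just a name, not an adjoint); $E_0,\ldots,E_d$ is an ordering of the primitive idempotents of $A$; $E^*_0,\ldots,E^*_d$ is an ordering of the primitive idempotents of $A^*$. The sequence $(A;A^*;\{E_i\};\{E^*_i\})$ is a Leonard system if for all $0\le i,j\le d$: $E^*_iAE^*_j=0$ if $|i-j|>1$, $E^*_iAE^*_j\ne0$ if $|i-j|=1$,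 $E_iA^*E_j=0$ if $|i-j|>1$, and $E_iA^*E_j\ne0$ if $|i-j|=1$. *)

From mathcomp Require Import all_boot all_order all_algebra.
Set Implicit Arguments. Unset Strict Implicit. Unset Printing Implicit Defensive.
Import GRing.Theory.
Local Open Scope ring_scope.

(* The algebra A ~ Mat_{d+1}(K) is taken to be 'M[K]_(d.+1) itself. *)

(* Since A has at most
   d+1 eigenvalues, th then enumerates all of them. *)
Definition mult_free_eigs (K : fieldType) (d : nat)
    (A : 'M[K]_(d.+1)) (th : 'I_(d.+1) -> K) : Prop :=
  injective th /\ forall i, eigenvalue A (th i).

Definition prim_idem (K : fieldType) (d : nat)
    (A : 'M[K]_(d.+1)) (th : 'I_(d.+1) -> K) (i : 'I_(d.+1)) : 'M[K]_(d.+1) :=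
  \prod_(j < d.+1 | j != i) ((th i - th j)^-1 *: (A - (th j)%:M)).

Definition lower_cond (K : fieldType) (d : nat)
    (X : 'I_(d.+1) -> 'M[K]_(d.+1)) (M : 'M[K]_(d.+1)) : Prop :=
  forall i j : 'I_(d.+1),
    ((j.+1 < i)%N -> X i * M * X j = 0) /\
    ((i == j.+1 :> nat) -> X i * M * X j != 0).

Definition upper_cond (K : fieldType) (d : nat)
    (X : 'I_(d.+1) -> 'M[K]_(d.+1)) (M : 'M[K]_(d.+1)) : Prop :=
  forall i j : 'I_(d.+1),
    ((i.+1 < j)%N -> X i * M * X j = 0) /\
    ((j == i.+1 :> nat) -> X i * M * X j != 0).

From mathcomp Require Import all_boot all_order all_algebra.
From mathcomp Require Import ring zify.
Set Implicit Arguments. Unset Strict Implicit. Unset Printing Implicit Defensive.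
Import GRing.Theory.
Local Open Scope ring_scope.

(* If C1 and C2 hold, then in an eigenbasis of A* the matrix A is irreducible
   tridiagonal, so a diagonal rescaling makes it symmetric: there is an
   invertible S with S A = A^T S and S A* = A*^T S.  Every E_i is a polynomial
   in A, so S E_i = E_i^T S as well, whence S (E_i A* E_j) = (E_j A* E_i)^T S.
   Thus E_i A* E_j = 0 iff E_j A* E_i = 0, which makes C3 and C4 equivalent.
   Exchanging the roles of A and A*, C3 and C4 make C1 and C2 equivalent. *)

Section LeonardSymmetry.
Variables (K : fieldType) (n : nat).
Local Notation M := 'M[K]_n.+1.
Implicit Types (X Y P S : M) (th : 'I_n.+1 -> K).

Definition lagrange_poly th i : {poly K} :=
  \prod_(j < n.+1 | j != i) ((th i - th j)^-1 *: ('X - (th j)%:P)).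

Lemma prim_idem_horner X th i :
  prim_idem X th i = horner_mx X (lagrange_poly th i).
Proof.
rewrite /prim_idem /lagrange_poly rmorph_prod; apply: eq_bigr => j _.
by rewrite /= horner_mxZ rmorphB /= horner_mx_X horner_mx_C.
Qed.

Lemma lagrange_polyE th i k : injective th ->
  (lagrange_poly th i).[th k] = (k == i)%:R.
Proof.
move=> th_inj; rewrite horner_prod; have [->|neq_ki] := eqVneq k i.
  apply: big1 => j neq_ji; rewrite hornerZ hornerXsubC mulVf // subr_eq0.
  by apply: contra neq_ji => /eqP/th_inj ->.
by rewrite (bigD1 k) //= hornerZ hornerXsubC subrr mulr0 mul0r.
Qed.

Lemma prim_idem_diag th i : injective th ->
  prim_idem (diag_mx (\row_k th k)) th i = delta_mx i i.
Proof.
move=> th_inj; rewrite prim_idem_horner horner_mx_diag.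
apply/matrixP => a b; rewrite !mxE lagrange_polyE //.
have [->|neq_ai] := eqVneq a i; last by rewrite mul0rn.
by rewrite eq_sym; case: (b == i).
Qed.

Lemma horner_mx_intertwine P X Y p : P *m X = Y *m P ->
  P *m horner_mx X p = horner_mx Y p *m P.
Proof.
move=> PXY; elim/poly_ind: p => [|p c IHp].
  by rewrite !rmorph0 mulmx0 mul0mx.
rewrite !(rmorphD, rmorphM) /= !(horner_mx_X, horner_mx_C) -!mulmxE.
by rewrite mulmxDr mulmxDl mulmxA IHp -!mulmxA PXY scalar_mxC.
Qed.

Lemma trmx_horner_mx X p : (horner_mx X p)^T = horner_mx X^T p.
Proof.
elim/poly_ind: p => [|p c IHp]; first by rewrite !rmorph0 trmx0.
rewrite !(rmorphD, rmorphM) /= !(horner_mx_X, horner_mx_C) -!mulmxE.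
rewrite linearD /= trmx_mul tr_scalar_mx IHp.
by rewrite (horner_mx_intertwine _ (erefl (X^T *m X^T))).
Qed.

Lemma prim_idem_intertwine P X Y th i : P *m X = Y *m P ->
  P *m prim_idem X th i = prim_idem Y th i *m P.
Proof. by rewrite !prim_idem_horner; exact: horner_mx_intertwine. Qed.

Lemma mult_free_diagonalizable X th : mult_free_eigs X th ->
  exists2 P : M, P \in unitmx & P *m X = diag_mx (\row_k th k) *m P.
Proof.
case=> th_inj eig_th.
have /fin_all_exists2[v v_eig v_nz] i :
    exists2 v : 'rV_n.+1, v *m X = th i *: v & v != 0.
  exact/eigenvalueP.
pose P : M := \matrix_i v i.
have PX : P *m X = diag_mx (\row_k th k) *m P.
  apply/row_matrixP => i; rewrite row_mul rowK v_eig mul_diag_mx.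
  by apply/rowP => j; rewrite !mxE -(rowK v i) mxE.
exists P => //; rewrite -row_free_unit -kermx_eq0; apply/eqP/row_matrixP => r.
set u := row r (kermx P); rewrite row0; apply/rowP => k; rewrite mxE.
have uP0 : u *m P = 0 by rewrite -row_mul mulmx_ker row0.
(* u E_k P = u_k v_k, and E_k P = P E_k(X) is killed by u since u P = 0 *)
have : u *m (delta_mx k k *m P) = 0.
  rewrite -(prim_idem_diag k th_inj) -(prim_idem_intertwine _ _ PX).
  by rewrite mulmxA uP0 mul0mx.
rewrite -[delta_mx k k](mul_delta_mx (0 : 'I_1)) -!mulmxA -rowE rowK mulmxA.
rewrite -colE (mx11_scalar (col _ _)) mul_scalar_mx => /eqP.
by rewrite scalemx_eq0 (negPf (v_nz k)) orbF !mxE => /eqP.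
Qed.

Lemma delta_mulmx_delta (T : M) i j :
  delta_mx i i *m T *m delta_mx j j = T i j *: delta_mx i j.
Proof.
rewrite -[X in X *m T](mul_delta_mx (0 : 'I_1)).
rewrite -[X in _ *m X](mul_delta_mx (0 : 'I_1)).
rewrite !mulmxA -(mulmxA _ _ T) -rowE -(mulmxA _ _ (delta_mx j 0)) -colE.
rewrite (mx11_scalar (col _ _)) !mxE -mulmxA mul_scalar_mx -scalemxAr.
by rewrite mul_delta_mx.
Qed.

Lemma prim_idem_sandwich_eq0 X Y P th i j : injective th -> P \in unitmx ->
  P *m X = diag_mx (\row_k th k) *m P ->
  (prim_idem X th i *m Y *m prim_idem X th j == 0) =
  ((P *m Y *m invmx P) i j == 0).
Proof.
move=> th_inj uP PX.
have E_conj k : prim_idem X th k = invmx P *m delta_mx k k *m P.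
  rewrite -(prim_idem_diag k th_inj) -mulmxA.
  by rewrite -(prim_idem_intertwine _ _ PX) mulKmx.
rewrite !E_conj.
have -> : invmx P *m delta_mx i i *m P *m Y *m (invmx P *m delta_mx j j *m P)
    = invmx P *m (delta_mx i i *m (P *m Y *m invmx P) *m delta_mx j j) *m P.
  by rewrite !mulmxA.
rewrite delta_mulmx_delta -scalemxAr -scalemxAl scalemx_eq0.
rewrite (_ : _ *m P == 0 = false) ?orbF //; apply/negbTE/eqP.
move/(congr1 (fun Z => P *m Z *m invmx P)).
rewrite !mulmxA mulmxV // mul1mx mulmxK // mulmx0 mul0mx => /matrixP/(_ i j).
by rewrite !mxE !eqxx => /eqP; rewrite oner_eq0.
Qed.

Definition selfadjoint S X := S *m X = X^T *m S.

Lemma selfadjoint_horner S X p :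
  selfadjoint S X -> selfadjoint S (horner_mx X p).
Proof. by rewrite /selfadjoint trmx_horner_mx; exact: horner_mx_intertwine. Qed.

Lemma selfadjoint_prim_idem S X th i :
  selfadjoint S X -> selfadjoint S (prim_idem X th i).
Proof. by rewrite prim_idem_horner; exact: selfadjoint_horner. Qed.

Lemma selfadjoint_congr P S X Y : P *m X = Y *m P -> selfadjoint S Y ->
  selfadjoint (P^T *m S *m P) X.
Proof.
rewrite /selfadjoint => PXY SY.
by rewrite -mulmxA PXY mulmxA -(mulmxA _ S) SY !mulmxA -trmx_mul -PXY trmx_mul.
Qed.

Lemma selfadjoint_sandwich_eq0 S U V Y : S \in unitmx ->
  selfadjoint S U -> selfadjoint S V -> selfadjoint S Y ->
  (U *m Y *m V == 0) = (V *m Y *m U == 0).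
Proof.
move=> uS SU SV SY.
suff imp U' V' : selfadjoint S U' -> selfadjoint S V' ->
    U' *m Y *m V' = 0 -> V' *m Y *m U' = 0.
  by apply/eqP/eqP; apply: imp.
move=> SU' SV' UYV.
have : S *m (V' *m Y *m U') = (U' *m Y *m V')^T *m S.
  rewrite !mulmxA SV' -(mulmxA _ S Y) SY mulmxA -(mulmxA _ S U') SU'.
  by rewrite !trmx_mul !mulmxA.
rewrite UYV trmx0 mul0mx => /(congr1 (mulmx (invmx S))).
by rewrite mulKmx // mulmx0.
Qed.

(* The weights s_k = prod_(l < k) T_(l,l+1) / T_(l+1,l) make diag(s) T
   symmetric. *)
Lemma tridiagonal_symmetrizable (T : M) :
  (forall i j : 'I_n.+1, (j.+1 < i)%N -> T i j = 0) ->
  (forall i j : 'I_n.+1, (i.+1 < j)%N -> T i j = 0) ->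
  (forall i j : 'I_n.+1, i = j.+1 :> nat -> T i j != 0) ->
  (forall i j : 'I_n.+1, j = i.+1 :> nat -> T i j != 0) ->
  exists2 s : 'rV[K]_n.+1, forall k, s 0 k != 0 & selfadjoint (diag_mx s) T.
Proof.
move=> T_low T_up T_sub T_super.
pose f l := T (inord l) (inord l.+1) / T (inord l.+1) (inord l).
have f_neq0 l : (l < n)%N -> f l != 0.
  move=> lt_ln; rewrite mulf_neq0 ?invr_eq0 //.
    by apply: T_super; rewrite !inordK // ltnS ltnW.
  by apply: T_sub; rewrite !inordK // ltnS ltnW.
have prod_f_succ (a b : 'I_n.+1) : b = a.+1 :> nat ->
    \prod_(l < b) f l = \prod_(l < a) f l * (T a b / T b a).
  move=> eq_ba; rewrite eq_ba big_ord_recr /= /f.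
  have -> : inord a = a by apply: val_inj; rewrite /= inordK.
  by have -> : inord a.+1 = b by apply: val_inj; rewrite /= inordK -eq_ba.
exists (\row_k \prod_(l < k) f l).
  move=> k; rewrite mxE; apply/prodf_neq0 => l _; apply: f_neq0.
  exact: leq_trans (ltn_ord l) (ltn_ord k).
rewrite /selfadjoint mul_diag_mx mul_mx_diag.
apply/matrixP => a b; rewrite !mxE.
case: (ltngtP a b) => [lt_ab|lt_ba|eq_ab].
- case: (ltngtP a.+1 b) => [lt_ab'|?|eq_ab'].
  + by rewrite (T_up a b) // (T_low b a) // mulr0 mul0r.
  + by exfalso; lia.
  + have Tba_neq0 := T_sub b a (esym eq_ab').
    by rewrite (prod_f_succ a b) //; field.
- case: (ltngtP b.+1 a) => [lt_ba'|?|eq_ba'].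
  + by rewrite (T_low a b) // (T_up b a) // mulr0 mul0r.
  + by exfalso; lia.
  + have Tab_neq0 := T_sub a b (esym eq_ba').
    by rewrite (prod_f_succ b a) //; field.
- by rewrite (val_inj eq_ab) mulrC.
Qed.

Lemma tridiagonal_symmetrizer X Xs ths : mult_free_eigs Xs ths ->
  lower_cond (prim_idem Xs ths) X -> upper_cond (prim_idem Xs ths) X ->
  exists2 S : M, S \in unitmx & selfadjoint S X /\ selfadjoint S Xs.
Proof.
move=> mfXs low up; have [P uP PXs] := mult_free_diagonalizable mfXs.
set T := P *m X *m invmx P.
have E_T i j :
    (prim_idem Xs ths i *m X *m prim_idem Xs ths j == 0) = (T i j == 0).
  exact: prim_idem_sandwich_eq0 mfXs.1 uP PXs.
have [s s_neq0 sT] : exists2 s : 'rV[K]_n.+1,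
    forall k, s 0 k != 0 & selfadjoint (diag_mx s) T.
  apply: tridiagonal_symmetrizable => i j ij.
  - by apply/eqP; rewrite -E_T; apply/eqP; exact: (low i j).1.
  - by apply/eqP; rewrite -E_T; apply/eqP; exact: (up i j).1.
  - by rewrite -E_T; apply: (low i j).2; apply/eqP.
  - by rewrite -E_T; apply: (up i j).2; apply/eqP.
exists (P^T *m diag_mx s *m P); last split.
- rewrite !unitmx_mul unitmx_tr uP andbT unitmxE det_diag unitfE.
  exact/prodf_neq0.
- by apply: selfadjoint_congr sT; rewrite /T mulmxKV.
- by apply: selfadjoint_congr PXs _; rewrite /selfadjoint tr_diag_mx diag_mxC.
Qed.

Lemma lower_upper_cond_swap (X : 'I_n.+1 -> M) Y :
  (forall i j, (X i * Y * X j == 0) = (X j * Y * X i == 0)) ->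
  lower_cond X Y <-> upper_cond X Y.
Proof.
move=> swap; split=> cond i j; have [zero nonzero] := cond j i;
  by split=> [/zero XYX0|/nonzero]; [apply/eqP; rewrite swap XYX0|rewrite swap].
Qed.

Lemma lower_upper_cond_selfadjoint S X Y th : S \in unitmx ->
  selfadjoint S X -> selfadjoint S Y ->
  lower_cond (prim_idem X th) Y <-> upper_cond (prim_idem X th) Y.
Proof.
move=> uS SX SY; apply: lower_upper_cond_swap => i j; rewrite -!mulmxE.
exact: selfadjoint_sandwich_eq0 uS
  (selfadjoint_prim_idem th i SX) (selfadjoint_prim_idem th j SX) SY.
Qed.

Lemma lower_upper_cond_transfer X Xs th ths : mult_free_eigs Xs ths ->
  lower_cond (prim_idem Xs ths) X -> upper_cond (prim_idem Xs ths) X ->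
  lower_cond (prim_idem X th) Xs <-> upper_cond (prim_idem X th) Xs.
Proof.
move=> mfXs low up; have [S uS [SX SXs]] := tridiagonal_symmetrizer mfXs low up.
exact: lower_upper_cond_selfadjoint uS SX SXs.
Qed.

End LeonardSymmetry.

Theorem lemma5p7 (K : fieldType) (d : nat) (A As : 'M[K]_(d.+1))
    (th ths : 'I_(d.+1) -> K)
    (hA : mult_free_eigs A th) (hAs : mult_free_eigs As ths) :
  let E := prim_idem A th in
  let Es := prim_idem As ths in
  let C1 := lower_cond Es A in
  let C2 := upper_cond Es A in
  let C3 := lower_cond E As in
  let C4 := upper_cond E As in
  [\/ C1 /\ C2 /\ C3, C1 /\ C2 /\ C4, C1 /\ C3 /\ C4 | C2 /\ C3 /\ C4] ->
  C1 /\ C2 /\ C3 /\ C4.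
Proof.
move=> E Es C1 C2 C3 C4.
have C34 : C1 -> C2 -> (C3 <-> C4) := lower_upper_cond_transfer th hAs.
have C12 : C3 -> C4 -> (C1 <-> C2) := lower_upper_cond_transfer ths hA.
case=> [[c1 [c2 c3]]|[c1 [c2 c4]]|[c1 [c3 c4]]|[c2 [c3 c4]]].
- by have c4 := (C34 c1 c2).1 c3.
- by have c3 := (C34 c1 c2).2 c4.
- by have c2 := (C12 c3 c4).1 c1.
- by have c1 := (C12 c3 c4).2 c2.
Qed.
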